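(* For a positive integer $m$, let $K(m)$ denote the least positive integer $K$ such that there exist $a_1,a_2,a_3,a_4\in\mathbb{Z}$ with $m=a_1^2+a_2^2+a_3^2+a_4^2$ and, for each $i$, either $a_i=0$ or $a_i\ge \frac{\sqrt{m}}{K}$. If $n$ is an even positive integer with $K(n)=\tilde K$, then there are infinitely many positive integers $m$ with $K(m)=\tilde K$.
   Context: $K(m)$ is well defined for every positive integer $m$ by Lagrange's four-square theorem. *)

From Stdlib Require Import Reals ZArith Arith Lia List.
Open Scope R_scope.

Definition admissible (m K : nat) : Prop :=
  exists a1 a2 a3 a4 : Z,
    (Z.of_nat m = a1 * a1 + a2 * a2 + a3 * a3 + a4 * a4)%Z /\
    (forall a, List.In a (a1 :: a2 :: a3 :: a4 :: nil) ->
       a = 0%Z \/ IZR a >= sqrt (INR m) / INR K).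

Definition IsK (m K : nat) : Prop :=
  (0 < K)%nat /\ admissible m K /\
  (forall K', (0 < K')%nat -> admissible m K' -> (K <= K')%nat).

(* Doubling the four integers turns a representation of m into one of 4m
   and doubles sqrt m, so admissibility of K is preserved.  Conversely, when
   m is even, 8 divides 4m, and a sum of four squares divisible by 8 has
   only even terms (odd squares are 1 mod 8, even ones 0 mod 4), so every
   representation of 4m halves to one of m.  Hence K(4m) = K(m) for even m,
   and the numbers 4^k n realize K(n) infinitely often. *)
From Stdlib Require Import Reals ZArith Arith Lia Lra List.

Lemma Z_odd_square (a : Z) : Z.Odd a -> exists k, (a * a = 8 * k + 1)%Z.
Proof.
  intros [x ->].
  destruct (Z.Even_or_Odd x) as [[y ->]|[y ->]].
  - exists (2 * y * y + y)%Z; ring.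
  - exists (2 * y * y + 3 * y + 1)%Z; ring.
Qed.

Lemma Z_even_square (a : Z) : Z.Even a -> exists k, (a * a = 4 * k)%Z.
Proof. intros [x ->]; exists (x * x)%Z; ring. Qed.

Lemma four_squares_8div_even (a1 a2 a3 a4 t : Z) :
  (a1 * a1 + a2 * a2 + a3 * a3 + a4 * a4 = 8 * t)%Z ->
  Z.Even a1 /\ Z.Even a2 /\ Z.Even a3 /\ Z.Even a4.
Proof.
  intros Hsum.
  assert (Hsq : forall a : Z, Z.Even a \/ exists k, (a * a = 8 * k + 1)%Z).
  { intros a; destruct (Z.Even_or_Odd a) as [He|Ho];
      [left; exact He | right; exact (Z_odd_square a Ho)]. }
  destruct (Hsq a1) as [E1|[k1 H1]]; destruct (Hsq a2) as [E2|[k2 H2]];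
  destruct (Hsq a3) as [E3|[k3 H3]]; destruct (Hsq a4) as [E4|[k4 H4]];
  try (repeat split; assumption); exfalso;
  repeat match goal with
  | E : Z.Even ?a |- _ => destruct (Z_even_square a E) as [? ?]; clear E
  end; lia.
Qed.

Lemma sqrt_INR_4mul (m : nat) : sqrt (INR (4 * m)) = 2 * sqrt (INR m).
Proof.
  rewrite mult_INR, sqrt_mult by (simpl; lra || apply pos_INR).
  replace (INR 4) with (2 * 2) by (simpl; lra).
  rewrite sqrt_square by lra; reflexivity.
Qed.

Lemma zero_or_ge_double (b : Z) (s K : R) :
  (b = 0%Z \/ IZR b >= s / K) <-> ((2 * b)%Z = 0%Z \/ IZR (2 * b) >= 2 * s / K).
Proof.
  rewrite mult_IZR; unfold Rdiv.
  split; intros [H|H]; solve [left; lia | right; lra].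
Qed.

Lemma admissible_4mul (m K : nat) : admissible m K -> admissible (4 * m) K.
Proof.
  intros (a1 & a2 & a3 & a4 & Heq & Hbig).
  exists (2 * a1)%Z, (2 * a2)%Z, (2 * a3)%Z, (2 * a4)%Z; split.
  - rewrite Nat2Z.inj_mul, Heq; ring.
  - rewrite sqrt_INR_4mul.
    intros a [<-|[<-|[<-|[<-|[]]]]];
      apply (proj1 (zero_or_ge_double _ _ _)), Hbig; simpl; tauto.
Qed.

Lemma admissible_4mul_even (m K : nat) :
  Nat.Even m -> admissible (4 * m) K -> admissible m K.
Proof.
  intros [t ->] (a1 & a2 & a3 & a4 & Heq & Hbig).
  rewrite !Nat2Z.inj_mul in Heq.
  destruct (four_squares_8div_even a1 a2 a3 a4 (Z.of_nat t))
    as [[b1 ->] [[b2 ->] [[b3 ->] [b4 ->]]]]; [lia|].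
  exists b1, b2, b3, b4; split.
  - rewrite Nat2Z.inj_mul; lia.
  - rewrite sqrt_INR_4mul in Hbig.
    intros a [<-|[<-|[<-|[<-|[]]]]];
      apply (proj2 (zero_or_ge_double _ _ _)), Hbig; simpl; tauto.
Qed.

Lemma IsK_4mul_even (m K : nat) : Nat.Even m -> IsK m K -> IsK (4 * m) K.
Proof.
  intros He (HK & Hadm & Hmin); repeat split.
  - exact HK.
  - exact (admissible_4mul m K Hadm).
  - intros K' HK' Hadm'; apply Hmin; [exact HK'|].
    exact (admissible_4mul_even m K' He Hadm').
Qed.

Lemma IsK_4pow_mul (n K k : nat) : Nat.Even n -> IsK n K -> IsK (4 ^ k * n) K.
Proof.
  intros He HK; induction k as [|k IH]; [now rewrite Nat.mul_1_l|].
  rewrite Nat.pow_succ_r', <- Nat.mul_assoc.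
  apply IsK_4mul_even; [|exact IH].
  now apply Nat.Even_mul_r.
Qed.

Theorem proposition5 (n Kt : nat) :
  (0 < n)%nat -> Nat.Even n -> IsK n Kt ->
  forall N : nat, exists m : nat, (N < m)%nat /\ (0 < m)%nat /\ IsK m Kt.
Proof.
  intros Hn He HK N.
  exists (4 ^ N * n)%nat.
  assert (HN : (N < 4 ^ N)%nat) by (apply Nat.pow_gt_lin_r; lia).
  split; [nia|split; [nia|]].
  exact (IsK_4pow_mul n Kt N He HK).
Qed.
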